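(* Let $(V,d)$ be a $\gamma$-coherent geometry with $|V|=n$, with (H2) holding for constants $\phi>0$ and $0<\lambda<1$, let $E_0$ be a substrate for $(V,d)$, let $\theta>0$, and let $E_q$ be a random edge set sampled from a product measure $G(n,\mathbf{Q})$ that is $\theta$-uniformly rich for $(V,d)$. Then with high probability the graph $G(V,E_0\cup E_q)$ is $(\theta+1)$-reducible.
   Context: Geometry $(V,d)$: finite $V$, $d$ symmetric, nonnegative, $d(x,y)=0$ iff $x=y$. For $\gamma>1$, $K=\lceil\log_\gamma n\rceil$, $P_k(v)=\#\{u: d(v,u)\in(\gamma^{k-1},\gamma^k]\}$; for $v\ne t$, $k_{vt}$ is the integer with $d(v,t)\in(\gamma^{k_{vt}-1},\gamma^{k_{vt}}]$ and $D_\lambda(v,t)=\{u: d(v,u)\le\gamma^{k_{vt}},\ d(u,t)\le\lambda d(v,t)\}$. $(V,d)$ is $\gamma$-coherent if (H1) there are $A>1,\alpha>0$ with $\alpha\gamma^k\le P_k(v)\le A\gamma^k$ for all $v$, $k\in[K]$, and (H2) there are $\phi>0$, $0<\lambda<1$ with $|D_\lambda(v,t)|\ge\phi\gamma^{k_{vt}}$ for all $v\ne t$. Substrate: an edge set $E_0$ such that for every $s\ne t$ there is $v$ with $\{s,v\}\in E_0$ and $d(v,t)\le d(s,t)-1$; one such $v$ is fixed and called the local $t$-connection of $s$. The local $(s,t)$-path starts at $s$ and repeatedly moves to the local $t$-connection of the current vertex until reaching $t$. $G(n,\mathbf{Q})$ includes each pair $\{i,j\}$ independently with probability $Q_{ij}$.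 With $k_\theta=\frac{\theta\log\log n-\log\alpha}{\log\gamma}$, it is $\theta$-uniformly rich if there is a constant $M>0$ such that for every $k\ge k_\theta$ and every pair with $d(i,j)\in(\gamma^{k-1},\gamma^k]$, $Q_{ij}\ge\frac{1}{M\log^\theta(n)\gamma^k}$. Reducibility: a graph $G(V,E)$ is $p$-reducible if there is a constant $C>0$ such that for every pair $s\ne t$, among the first $C(\log|V|)^p$ vertices of the local $(s,t)$-path there is a vertex $u$ with an edge $\{u,v\}\in E$ such that $d(v,t)\le\lambda d(s,t)$ ($\lambda$ the constant from (H2)). ''With high probability'': probability $\to1$ as $n\to\infty$. *)

From HB Require Import structures.
From mathcomp Require Import all_boot all_order all_algebra.
From mathcomp Require Import all_classical all_reals all_analysis.
Set Implicit Arguments. Unset Strict Implicit. Unset Printing Implicit Defensive.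
Import Order.TTheory GRing.Theory Num.Theory.
Local Open Scope ring_scope.

Section Defs.
Context {R : realType} {n : nat}.
Implicit Types (d : 'I_n -> 'I_n -> R) (E : {set 'I_n * 'I_n}).

Definition geometry d :=
  (forall x y, d x y = d y x) /\ (forall x y, 0 <= d x y) /\
  (forall x y, d x y = 0 <-> x = y).

(* unordered edge {u,v} belongs to the edge set E (pairs stored in either order) *)
Definition adj E (u v : 'I_n) : bool := ((u, v) \in E) || ((v, u) \in E).

Definition Kcap (gamma : R) : int := Num.ceil (ln (n%:R : R) / ln gamma).

Definition Pk (gamma : R) d (v : 'I_n) (k : int) : nat :=
  #|[set u | (gamma ^ (k - 1) < d v u) && (d v u <= gamma ^ k)]|.

Definition H1 (gamma A alpha : R) d :=
  1 < A /\ 0 < alpha /\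
  forall (v : 'I_n) (k : nat), (1 <= k)%N -> (k%:Z <= Kcap gamma) ->
    alpha * gamma ^ k%:Z <= (Pk gamma d v k%:Z)%:R <= A * gamma ^ k%:Z.

(* D_lambda(v,t), where k is k_{vt} *)
Definition Dset (gamma lambda : R) d (v t : 'I_n) (k : int) : {set 'I_n} :=
  [set u | (d v u <= gamma ^ k) && (d u t <= lambda * d v t)].

(* (H2) with constants phi, lambda; k ranges over the (unique) integer k_{vt} *)
Definition H2 (gamma phi lambda : R) d :=
  0 < phi /\ 0 < lambda < 1 /\
  forall (v t : 'I_n), v != t -> forall k : int,
    gamma ^ (k - 1) < d v t <= gamma ^ k ->
    phi * gamma ^ k <= (#|Dset gamma lambda d v t k|)%:R.

Definition coherent (gamma A alpha phi lambda : R) d :=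
  1 < gamma /\ geometry d /\ H1 gamma A alpha d /\ H2 gamma phi lambda d.

(* E0 is a substrate and conn s t is the (fixed) local t-connection of s *)
Definition substrate d E (conn : 'I_n -> 'I_n -> 'I_n) :=
  forall s t : 'I_n, s != t -> adj E s (conn s t) /\ d (conn s t) t <= d s t - 1.

Definition lpath (conn : 'I_n -> 'I_n -> 'I_n) (s t : 'I_n) (k : nat) : 'I_n :=
  iter k (fun x => if x == t then t else conn x t) s.

Definition reducible_with (lambda : R) d (conn : 'I_n -> 'I_n -> 'I_n) E (C p : R) :=
  forall s t : 'I_n, s != t ->
    exists k : nat, (k.+1)%:R <= C * (ln (n%:R : R)) `^ p /\
      exists v : 'I_n, adj E (lpath conn s t k) v /\ d v t <= lambda * d s t.

Definition prob_matrix (Q : 'I_n -> 'I_n -> R) :=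
  forall i j, Q i j = Q j i /\ 0 <= Q i j <= 1.

Definition rich (gamma alpha theta M : R) d (Q : 'I_n -> 'I_n -> R) :=
  0 < M /\
  forall k : int,
    (theta * ln (ln (n%:R : R)) - ln alpha) / ln gamma <= k%:~R ->
    forall i j : 'I_n, gamma ^ (k - 1) < d i j <= gamma ^ k ->
      1 / (M * (ln (n%:R : R)) `^ theta * gamma ^ k) <= Q i j.

(* unordered pairs {i,j}, i <> j, represented as (i,j) with i < j *)
Definition upairs : {set 'I_n * 'I_n} := [set p : 'I_n * 'I_n | (val p.1 < val p.2)%N].

Definition gnq_weight (Q : 'I_n -> 'I_n -> R) E : R :=
  \prod_(p in upairs) (if p \in E then Q p.1 p.2 else 1 - Q p.1 p.2).

Definition gnq_prob (Q : 'I_n -> 'I_n -> R) (P : {set 'I_n * 'I_n} -> Prop) : R :=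
  \sum_(E : {set 'I_n * 'I_n} | (E \subset upairs) && `[< P E >]) gnq_weight Q E.

End Defs.

From HB Require Import structures.
From mathcomp Require Import all_boot all_order all_algebra.
From mathcomp Require Import all_classical all_reals all_analysis.
From mathcomp Require Import ring lra zify.
From mathcomp Require unstable.
Set Implicit Arguments. Unset Strict Implicit. Unset Printing Implicit Defensive.
Import Order.TTheory GRing.Theory Num.Theory numFieldNormedType.Exports.
Local Open Scope ring_scope.

(* Fix s <> t and let u_0, u_1, ... be the local (s,t)-path.  If none of the first m
   vertices has an edge, substrate or random, ending within lambda d(s,t) of t, then
   these vertices stay farther than lambda d(s,t) from t while getting 1 closer at every
   step, so they are distinct.  By (H2) each u_j has at least phi gamma^k vertices in
   D_lambda(u_j,t), where k = k_{u_j t}; at most half of them lie within gamma^J of u_j,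
   J = floor k_theta, because those at distance < 2 would be substrate neighbours and
   the others are counted shell by shell with (H1).  Each remaining pair {u_j, v} is a
   random edge with probability at least 1 / (M log^theta n gamma^k); these pairs are
   distinct and must all be missing, which happens with probability at most
   exp (- m phi / (2 M log^theta n)) <= e^(phi/(2M)) n^-3 for
   m = floor ((6M/phi) log^(theta+1) n).  A union bound over the n^2 pairs (s,t) leaves
   a failure probability O(1/n). *)

(** * Product measures on the subsets of a finite set *)

Section ProductMeasure.
Variables (R : realType) (T : finType) (U : {set T}).

Lemma sum_subset_prod (f : T -> bool -> R) :
  \sum_(E : {set T} | E \subset U) \prod_(p in U) f p (p \in E) =
  \prod_(p in U) (f p true + f p false).
Proof.
pose F p := if p \in U then f p true else 0.
pose G p := if p \in U then f p false else 1.
have restrict (E : {set T}) : \prod_p (if p \in E then F p else G p) =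
    if E \subset U then \prod_(p in U) f p (p \in E) else 0.
  case: (boolP (E \subset U)) => [EU | /fintype.subsetPn [p pE pU]]; last first.
    by rewrite (bigD1 p) //= pE /F (negPf pU) mul0r.
  rewrite [LHS](bigID (mem U)) /= [X in _ * X]big1 ?mulr1 => [|p /negPf pU].
    by apply: eq_bigr => p pU; rewrite /F /G pU; case: (p \in E).
  by rewrite /G pU; case: ifP => // /(fintype.subsetP EU); rewrite pU.
rewrite big_mkcond /= -(eq_bigr _ (fun E _ => restrict E)) -bigA_distr.
rewrite [RHS]big_mkcond; apply: eq_bigr => p _.
by rewrite /F /G /=; case: (p \in U); rewrite ?add0r.
Qed.

Variable q : T -> R.
Hypothesis q01 : forall p, p \in U -> 0 <= q p <= 1.

(* [gnq_weight Q] and [gnq_prob Q] are [bern_weight] and [bern_prob] for [U := upairs]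
   and [q p := Q p.1 p.2]. *)
Definition bern_weight (E : {set T}) : R :=
  \prod_(p in U) (if p \in E then q p else 1 - q p).

Definition bern_prob (P : {set T} -> Prop) : R :=
  \sum_(E : {set T} | (E \subset U) && `[< P E >]) bern_weight E.

Lemma bern_weight_ge0 (E : {set T}) : 0 <= bern_weight E.
Proof.
apply: prodr_ge0 => p /q01 /andP[q0 q1].
by case: ifP; rewrite ?subr_ge0.
Qed.

Let bern_term_ge0 (b : bool) (E : {set T}) : 0 <= (if b then bern_weight E else 0).
Proof. by case: b; rewrite ?bern_weight_ge0. Qed.

Lemma sum_bern_weight : \sum_(E : {set T} | E \subset U) bern_weight E = 1.
Proof.
rewrite (sum_subset_prod (fun p b => if b then q p else 1 - q p)).
by apply: big1 => p _; rewrite addrC subrK.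
Qed.

Lemma bern_probE P :
  bern_prob P = \sum_(E : {set T} | E \subset U) (if `[< P E >] then bern_weight E else 0).
Proof. by rewrite /bern_prob big_mkcondr. Qed.

Lemma bern_probC P : bern_prob P = 1 - bern_prob (fun E => ~ P E).
Proof.
rewrite !bern_probE -sum_bern_weight -sumrB; apply: eq_bigr => E _.
by case: (asboolP (P E)) => ?; case: asboolP; rewrite ?subrr ?subr0.
Qed.

Lemma le_bern_prob (P P' : {set T} -> Prop) :
  (forall E : {set T}, E \subset U -> P E -> P' E) -> bern_prob P <= bern_prob P'.
Proof.
move=> PP'; rewrite !bern_probE; apply: ler_sum => E EU.
case: (asboolP (P E)) => [/(PP' E EU) P'E|_]; last exact: bern_term_ge0.
by rewrite asboolT.
Qed.

Lemma bern_prob_le1 P : bern_prob P <= 1.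
Proof.
rewrite -sum_bern_weight bern_probE; apply: ler_sum => E _.
by case: ifP => _; rewrite ?bern_weight_ge0.
Qed.

Lemma bern_prob_eq0 P : (forall E : {set T}, E \subset U -> ~ P E) -> bern_prob P = 0.
Proof. by move=> notP; rewrite bern_probE big1 // => E /notP /asboolPn /negPf ->. Qed.

Lemma bern_prob_exists (I : finType) (B : I -> {set T} -> Prop) :
  bern_prob (fun E => exists i, B i E) <= \sum_i bern_prob (B i).
Proof.
under [X in _ <= X]eq_bigr => i _ do rewrite bern_probE.
rewrite exchange_big bern_probE; apply: ler_sum => E _.
case: asboolP => [[i Bi]|_]; last exact: sumr_ge0.
by rewrite (bigD1 i) //= asboolT // lerDl sumr_ge0.
Qed.

Lemma bern_prob_disjoint (S : {set T}) : S \subset U ->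
  bern_prob (fun E => [disjoint E & S]) = \prod_(p in S) (1 - q p).
Proof.
move=> SU.
pose f p b := if b then (if p \in S then 0 else q p) else 1 - q p.
have weightE (E : {set T}) : E \subset U ->
    (if `[< [disjoint E & S] >] then bern_weight E else 0) = \prod_(p in U) f p (p \in E).
  move=> EU; case: asboolP => [ES|/negP].
    by apply: eq_bigr => p _; rewrite /f; case: ifP => // pE; rewrite (disjointFr ES pE).
  rewrite -setI_eq0 => /set0Pn [p]; rewrite inE => /andP[pE pS].
  by rewrite (bigD1 p) ?(fintype.subsetP SU) //= /f pE pS mul0r.
rewrite bern_probE (eq_bigr _ weightE) sum_subset_prod (big_setID S) /= (finset.setIidPr SU).
rewrite [X in _ * X]big1 ?mulr1 => [|p /setDP [_ /negPf pS]].
  by apply: eq_bigr => p pS; rewrite /f pS add0r.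
by rewrite /f pS addrC subrK.
Qed.

End ProductMeasure.

Lemma prod_1B_le_expR (R : realType) (I : finType) (S : {pred I}) (q : I -> R) :
  (forall p, p \in S -> q p <= 1) ->
  \prod_(p in S) (1 - q p) <= expR (- \sum_(p in S) q p).
Proof.
move=> q1; rewrite -sumrN expR_sum; apply: ler_prod => p /q1 qp1.
by rewrite subr_ge0 qp1 /=; have := expR_ge1Dx (- q p).
Qed.

(** * Scales, local paths and unordered pairs *)

Section Scales.
Variables (R : realType) (g : R).
Hypothesis g_gt1 : 1 < g.

Let g_gt0 : 0 < g. Proof. exact: lt_trans g_gt1. Qed.

(* For x = d v t this is the paper's k_{vt}. *)
Definition scale_index (x : R) : int := Num.ceil (ln x / ln g).

Lemma scale_indexP x : 0 < x -> g ^ (scale_index x - 1) < x <= g ^ scale_index x.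
Proof.
move=> x_gt0; have /andP[lo hi] := ceil_itv (ln x / ln g).
have lng_gt0 : 0 < ln g by exact: ln_gt0.
have lnxK : expR (ln x) = x by rewrite lnK ?posrE.
rewrite -!powR_intmul ?(ltW g_gt0) // /powR gt_eqF // -{2 3}lnxK ltr_expR ler_expR.
by rewrite -ltr_pdivlMr // -ler_pdivrMr // lo hi.
Qed.

Lemma scale_index_le x (k : int) : 0 < x -> x <= g ^ k -> scale_index x <= k.
Proof.
move=> x_gt0 xk; have /andP[lo _] := scale_indexP x_gt0.
by rewrite -ltzD1 -ltrBlDr -(ltr_eXz2l g_gt1); exact: lt_le_trans lo xk.
Qed.

Lemma scale_index_gt x (k : int) : g ^ k < x -> k < scale_index x.
Proof.
move=> kx; have x_gt0 : 0 < x by apply: le_lt_trans kx; exact: exprz_ge0 (ltW g_gt0).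
have /andP[_ hi] := scale_indexP x_gt0.
by rewrite -(ltr_eXz2l g_gt1); exact: lt_le_trans kx hi.
Qed.

Lemma sum_expr_le (J : nat) : \sum_(j < J.+1) g ^+ j <= g ^+ J.+1 / (g - 1).
Proof.
have g1_gt0 : 0 < g - 1 by rewrite subr_gt0.
elim: J => [|J IH]; first by rewrite big_ord1 expr1 ler_pdivlMr //; lra.
have -> : g ^+ J.+2 / (g - 1) = g ^+ J.+1 / (g - 1) + g ^+ J.+1.
  by rewrite exprS; field; rewrite gt_eqF.
by rewrite big_ord_recr lerD2r.
Qed.

End Scales.

Lemma mul_ln_le (R : realType) (theta x : R) : 0 < theta -> 0 < x ->
  theta * ln x <= x / 2 + theta * ln (2 * theta).
Proof.
move=> theta_gt0 x_gt0; have theta2_gt0 : 0 < 2 * theta by rewrite mulr_gt0.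
have := ln_sublinear (divr_gt0 x_gt0 theta2_gt0); rewrite ln_div ?posrE //.
move=> /ltW /(ler_wpM2l (ltW theta_gt0)).
have -> : theta * (x / (2 * theta)) = x / 2 by field; rewrite gt_eqF.
by rewrite mulrBr; lra.
Qed.

Section Substrate.
Variables (R : realType) (n : nat) (d : 'I_n -> 'I_n -> R).
Variables (E0 : {set 'I_n * 'I_n}) (conn : 'I_n -> 'I_n -> 'I_n).
Hypotheses (d_ge0 : forall x y, 0 <= d x y) (E0_sub : substrate d E0 conn).

Lemma substrate_dist_ge1 x y : x != y -> 1 <= d x y.
Proof. by move=> /E0_sub [_]; have := d_ge0 (conn x y) y; lra. Qed.

Lemma substrate_adj_lt2 x y : x != y -> d x y < 2 -> adj E0 x y.
Proof.
move=> xy dxy; have [adj_conn dconn] := E0_sub xy.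
have [<- //|cy] := eqVneq (conn x y) y.
by have := substrate_dist_ge1 cy; lra.
Qed.

Section LocalPath.
Hypothesis d_xx : forall x, d x x = 0.
Variables (lambda : R) (s t : 'I_n) (m : nat).
Hypotheses (lambda_gt0 : 0 < lambda) (lambda_lt1 : lambda < 1) (st : s != t).
Hypothesis no_shortcut : forall k, (k < m)%N ->
  forall v, adj E0 (lpath conn s t k) v -> lambda * d s t < d v t.

Local Notation u := (lpath conn s t).

Let dst_ge1 : 1 <= d s t. Proof. exact: substrate_dist_ge1. Qed.

Let neq_of_far x : lambda * d s t < d x t -> x != t.
Proof. by apply: contraTneq => ->; rewrite d_xx -leNgt mulr_ge0 // ltW. Qed.

Lemma lpath_far j : (j <= m)%N -> lambda * d s t < d (u j) t.
Proof.
elim: j => [_|j IH jm]; first by move: dst_ge1 lambda_lt1 => /=; nra.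
have /negPf ujt := neq_of_far (IH (ltnW jm)).
by apply: no_shortcut jm _ _; rewrite /= ujt; case: (E0_sub (negbT ujt)).
Qed.

Lemma lpath_neq j : (j <= m)%N -> u j != t.
Proof. by move/lpath_far; exact: neq_of_far. Qed.

Lemma lpath_dist_sub i j : (i + j <= m)%N -> d (u (i + j)) t <= d (u i) t - j%:R.
Proof.
elim: j => [|j IH] ijm; first by rewrite addn0 subr0.
have ijm' : (i + j <= m)%N by apply: leq_trans ijm; rewrite addnS.
have [_] := E0_sub (lpath_neq ijm').
rewrite addnS /= (negPf (lpath_neq ijm')) -natr1.
by have := IH ijm'; lra.
Qed.

Lemma lpath_len_lt : m%:R < d s t.
Proof.
have := @lpath_dist_sub 0 m (leqnn m); rewrite add0n /=.
have := lpath_far (leqnn m); have : 0 <= lambda * d s t by rewrite mulr_ge0 // ltW.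
lra.
Qed.

Lemma lpath_dist_lt i j : (i < j <= m)%N -> d (u j) t < d (u i) t.
Proof.
move=> /andP[ij jm]; have := @lpath_dist_sub i (j - i); rewrite subnKC ?(ltnW ij) //.
have : (0 : R) < (j - i)%:R by rewrite ltr0n subn_gt0.
by move=> + /(_ jm); lra.
Qed.

Lemma lpath_inj : injective (fun j : 'I_m => u j).
Proof.
move=> i j /= uij; apply: val_inj.
wlog ij : i j uij / (i <= j)%N.
  by move=> sym; case: (leqP i j) => [|/ltnW] ?; [|symmetry]; apply: sym.
apply/eqP; rewrite eqn_leq ij leqNgt /=; apply/negP => lt_ij.
by have := @lpath_dist_lt i j; rewrite lt_ij (ltnW (ltn_ord j)) uij ltxx => /(_ isT).
Qed.

End LocalPath.
End Substrate.

Section Annulus.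
Variables (R : realType) (n : nat) (gamma A alpha : R) (d : 'I_n -> 'I_n -> R).
Hypotheses (gamma_gt1 : 1 < gamma) (dH1 : H1 gamma A alpha d).

Let shell (w : 'I_n) (j : nat) :=
  [set v | (gamma ^ (j%:Z - 1) < d w v) && (d w v <= gamma ^ j%:Z)].

Lemma annulus_sub_shells (w : 'I_n) (J : nat) :
  [set v | (1 < d w v) && (d w v <= gamma ^ J%:Z)] \subset
  \bigcup_(j < J.+1 | (0 < j)%N) shell w j.
Proof.
apply/fintype.subsetP => v; rewrite inE => /andP[dv1 dvJ].
have dv_gt0 : 0 < d w v by apply: lt_trans dv1.
have k_gt0 : 0 < scale_index gamma (d w v) by apply: scale_index_gt; rewrite ?expr0z.
have kJ : scale_index gamma (d w v) <= J%:Z by exact: scale_index_le.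
have /andP[lo hi] := scale_indexP gamma_gt1 dv_gt0.
have [k kE] : exists k : nat, scale_index gamma (d w v) = k%:Z.
  by exists `|scale_index gamma (d w v)|%N; rewrite gez0_abs ?ltW.
rewrite kE in k_gt0 kJ lo hi.
have kJ' : (k < J.+1)%N by rewrite ltnS -lez_nat.
apply/bigcupP; exists (Ordinal kJ') => /=; first by rewrite -ltz_nat.
by rewrite inE lo hi.
Qed.

Lemma card_annulus_le (w : 'I_n) (J : nat) : J%:Z <= Kcap (n := n) gamma ->
  #|[set v | (1 < d w v) && (d w v <= gamma ^ J%:Z)]|%:R <=
  A * gamma / (gamma - 1) * gamma ^+ J.
Proof.
move=> JK; have [A_gt1 [_ P_le]] := dH1.
have gamma1_gt0 : 0 < gamma - 1 by rewrite subr_gt0.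
apply: (le_trans (y := \sum_(j < J.+1 | (0 < j)%N) #|shell w j|%:R)).
  rewrite -natr_sum ler_nat.
  exact: leq_trans (subset_leq_card (annulus_sub_shells w J)) (unstable.card_big_setU _ _ _).
apply: (le_trans (y := \sum_(j < J.+1) A * gamma ^+ j)).
  rewrite [leRHS](bigID (fun j : 'I_J.+1 => (0 < j)%N)) /= -[leLHS]addr0.
  apply: lerD; last by apply: sumr_ge0 => j _; rewrite mulr_ge0 ?exprn_ge0 // ltW // (lt_trans ltr01).
  apply: ler_sum => j j_gt0.
  have jK : j%:Z <= Kcap (n := n) gamma by apply: le_trans JK; rewrite lez_nat -ltnS.
  by have /andP[_] := P_le w j j_gt0 jK.
have -> : A * gamma / (gamma - 1) * gamma ^+ J = A * (gamma ^+ J.+1 / (gamma - 1)).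
  by rewrite exprS; field; rewrite gt_eqF.
by rewrite -mulr_sumr ler_wpM2l ?sum_expr_le // ltW // (lt_trans ltr01).
Qed.

End Annulus.

Section UnorderedPairs.
Variable n : nat.
Implicit Types (p : 'I_n * 'I_n) (X E : {set 'I_n * 'I_n}).

Definition upair p : 'I_n * 'I_n := if (p.1 < p.2)%N then p else (p.2, p.1).

Lemma upair_in_upairs p : p.1 != p.2 -> upair p \in upairs.
Proof.
case: p => a b /= ab; rewrite /upair inE /=.
by case: (ltngtP a b) => // eab; move: ab; rewrite (val_inj eab) eqxx.
Qed.

Lemma adj_upair E p : upair p \in E -> adj E p.1 p.2.
Proof. by case: p => a b; rewrite /upair /adj /=; case: ifP => _ ->; rewrite ?orbT. Qed.

Lemma adjUl E E' a b : adj E a b -> adj (E :|: E') a b.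
Proof. by rewrite /adj !inE => /orP[] ->; rewrite ?orbT. Qed.

Lemma upair_inj X : (forall p, p \in X -> (p.2, p.1) \notin X) -> {in X &, injective upair}.
Proof.
move=> noswap [a b] [a' b'] pX p'X; rewrite /upair /=.
have swap_neq : (a, b) <> (b', a') by move=> e; move: (noswap _ p'X); rewrite /= -e pX.
have swap_neq' : (b, a) <> (a', b') by move=> e; move: (noswap _ pX); rewrite /= e p'X.
by case: ifP => _; case: ifP => _ // [-> ->].
Qed.

Lemma sum_upair (R : zmodType) (Q : 'I_n -> 'I_n -> R) X :
  (forall i j, Q i j = Q j i) -> {in X &, injective upair} ->
  \sum_(p in upair @: X) Q p.1 p.2 = \sum_(p in X) Q p.1 p.2.
Proof.
move=> Qsym upair_injX; rewrite big_imset //=.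
by apply: eq_bigr => -[a b] _; rewrite /upair /=; case: ifP => // _; exact: Qsym.
Qed.

End UnorderedPairs.

Arguments upair {n} p.

(** * Shortcuts from a fixed local path *)

Section FixedSize.
Variables (R : realType) (n : nat) (gamma A alpha phi lambda theta M : R).
Variables (d : 'I_n -> 'I_n -> R) (E0 : {set 'I_n * 'I_n}) (conn : 'I_n -> 'I_n -> 'I_n).
Variable Q : 'I_n -> 'I_n -> R.
Hypotheses (dcoh : coherent gamma A alpha phi lambda d) (E0_sub : substrate d E0 conn).
Hypotheses (Qprob : prob_matrix Q) (Qrich : rich gamma alpha theta M d Q).

Let gamma_gt1 : 1 < gamma. Proof. by case: dcoh. Qed.
Let gamma_gt0 : 0 < gamma. Proof. exact: lt_trans gamma_gt1. Qed.
Let d_ge0 x y : 0 <= d x y. Proof. by case: dcoh => _ [[_ []]]. Qed.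
Let d_xx x : d x x = 0. Proof. by case: dcoh => _ [[_ [_ ->]]]. Qed.
Let alpha_gt0 : 0 < alpha. Proof. by case: dcoh => _ [_ [[_ []]]]. Qed.
Let A_gt0 : 0 < A. Proof. by case: dcoh => _ [_ [[A_gt1 _] _]]; exact: lt_trans A_gt1. Qed.
Let dH1 : H1 gamma A alpha d. Proof. by case: dcoh => _ [_ []]. Qed.
Let phi_gt0 : 0 < phi. Proof. by case: dcoh => _ [_ [_ []]]. Qed.
Let lambda_gt0 : 0 < lambda. Proof. by case: dcoh => _ [_ [_ [_ [/andP[]]]]]. Qed.
Let lambda_lt1 : lambda < 1. Proof. by case: dcoh => _ [_ [_ [_ [/andP[]]]]]. Qed.
Let dH2 v t k : v != t -> gamma ^ (k - 1) < d v t <= gamma ^ k ->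
  phi * gamma ^ k <= #|Dset gamma lambda d v t k|%:R.
Proof. by move=> vt; case: dcoh => _ [_ [_ [_ [_ /(_ v t vt k)]]]]. Qed.
Let M_gt0 : 0 < M. Proof. by case: Qrich. Qed.

Let L := ln (n%:R : R).
Let kth := (theta * ln L - ln alpha) / ln gamma.
Hypotheses (L_gt0 : 0 < L) (kth_ge0 : 0 <= kth) (kth_le : kth <= L / ln gamma).
(* J = floor k_theta: the richness bound applies to every pair farther apart than gamma^J. *)
Let J := Num.truncn kth.
Let Lth_gt0 : 0 < L `^ theta. Proof. exact: powR_gt0. Qed.

Lemma level_le_Kcap : J%:Z <= Kcap (n := n) gamma.
Proof.
rewrite /Kcap -(ler_int R); apply: le_trans (ceil_ge _).
by apply: le_trans kth_le; rewrite truncn_le.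
Qed.

Lemma expr_level_le : gamma ^+ J <= L `^ theta / alpha.
Proof.
rewrite -powR_mulrn ?(ltW gamma_gt0) //.
apply: (le_trans (y := gamma `^ kth)); first by rewrite ler_powR ?(ltW gamma_gt1) ?truncn_le.
rewrite /powR (gt_eqF gamma_gt0) (gt_eqF L_gt0) /kth mulfVK ?gt_eqF ?ln_gt0 //.
by rewrite expRB lnK ?posrE.
Qed.

Lemma rich_far_lb w v (k : int) : gamma ^ J%:Z < d w v <= gamma ^ k ->
  1 / (M * L `^ theta * gamma ^ k) <= Q w v.
Proof.
move=> /andP[Jv vk].
have dwv_gt0 : 0 < d w v by apply: le_lt_trans Jv; rewrite exprz_ge0 // ltW.
set j := scale_index gamma (d w v).
have Jj : J%:Z < j by exact: (scale_index_gt gamma_gt1 Jv).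
have jk : j <= k by exact: (scale_index_le gamma_gt1 dwv_gt0 vk).
have kth_j : kth <= j%:~R.
  apply/ltW/(lt_le_trans (truncnS_gt kth)).
  have Jj' : (J.+1)%:Z <= j by move: Jj; clear; lia.
  by move: Jj'; rewrite -(ler_int R).
case: Qrich => _ /(_ j kth_j w v (scale_indexP gamma_gt1 dwv_gt0)); apply: le_trans.
have ML_gt0 : 0 < M * L `^ theta by rewrite mulr_gt0 ?powR_gt0.
have pos (i : int) : 0 < M * L `^ theta * gamma ^ i by rewrite mulr_gt0 ?exprz_gt0.
by rewrite !div1r lef_pV2 ?posrE ?pos // ler_pM2l // ler_eXz2l.
Qed.

Section Path.
Variables (s t : 'I_n) (m : nat).
Hypotheses (st : s != t) (no_shortcut : forall k, (k < m)%N ->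
  forall v, adj E0 (lpath conn s t k) v -> lambda * d s t < d v t).
Hypothesis m_large :
  2 * (A * gamma / (gamma - 1)) * (L `^ theta / alpha) <= phi * lambda * m%:R.

Local Notation u := (lpath conn s t).
Let path_far := lpath_far d_ge0 E0_sub d_xx lambda_gt0 lambda_lt1 st no_shortcut.
Let path_neq := lpath_neq d_ge0 E0_sub d_xx lambda_gt0 lambda_lt1 st no_shortcut.
Let path_dist_sub := lpath_dist_sub d_ge0 E0_sub d_xx lambda_gt0 lambda_lt1 st no_shortcut.
Let path_len_lt := lpath_len_lt d_ge0 E0_sub d_xx lambda_gt0 lambda_lt1 st no_shortcut.

Let kt w := scale_index gamma (d w t).
Let far w := [set v | gamma ^ J%:Z < d w v].
Let targets w := Dset gamma lambda d w t (kt w) :&: far w.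

Let path_dist_le j : (j <= m)%N -> d (u j) t <= d s t.
Proof. by move=> jm; have := @path_dist_sub 0 j jm; rewrite add0n /=; have := ler0n R j; lra. Qed.

(* A vertex of D_lambda(u_j, t) within distance 1 of u_j would be a substrate
   neighbour of u_j, hence a shortcut. *)
Lemma near_targets_sub j : (j < m)%N ->
  Dset gamma lambda d (u j) t (kt (u j)) :\: far (u j) \subset
  [set v | (1 < d (u j) v) && (d (u j) v <= gamma ^ J%:Z)].
Proof.
move=> jm; apply/fintype.subsetP => v; rewrite !inE -leNgt => /andP[-> /andP[_ vt]].
have vt_le : d v t <= lambda * d s t.
  exact: le_trans vt (ler_wpM2l (ltW lambda_gt0) (path_dist_le (ltnW jm))).
have not_adj : ~~ adj E0 (u j) v by apply/negP => /(no_shortcut jm); rewrite ltNge vt_le.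
have uv : u j != v by apply/eqP => e; move: vt_le; rewrite -e leNgt (path_far (ltnW jm)).
rewrite andbT ltNge; apply: contra not_adj => dle1.
by apply: (substrate_adj_lt2 d_ge0 E0_sub uv); lra.
Qed.

Lemma card_targets j : (j < m)%N -> phi * gamma ^ kt (u j) / 2 <= #|targets (u j)|%:R.
Proof.
move=> jm; have jm' := ltnW jm.
have dwt_gt0 : 0 < d (u j) t.
  exact: le_lt_trans (mulr_ge0 (ltW lambda_gt0) (d_ge0 s t)) (path_far jm').
have Dset_ge := dH2 (path_neq jm') (scale_indexP gamma_gt1 dwt_gt0).
have lambda_m_lt : phi * (lambda * m%:R) < phi * gamma ^ kt (u j).
  have /andP[_ hi] := scale_indexP gamma_gt1 dwt_gt0.
  rewrite ltr_pM2l //; apply: lt_le_trans hi; apply: lt_trans (path_far jm').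
  by rewrite ltr_pM2l // path_len_lt.
have near_small : 2 * #|Dset gamma lambda d (u j) t (kt (u j)) :\: far (u j)|%:R <=
    phi * (lambda * m%:R).
  have c_ge0 : 0 <= A * gamma / (gamma - 1) by rewrite divr_ge0 ?mulr_ge0 ?subr_ge0 ?ltW.
  rewrite mulrA; apply: le_trans m_large; rewrite -mulrA ler_pM2l //.
  apply: le_trans (ler_wpM2l c_ge0 expr_level_le).
  apply: le_trans (card_annulus_le gamma_gt1 dH1 (u j) level_le_Kcap).
  by rewrite ler_nat subset_leq_card ?near_targets_sub.
have := cardsID (far (u j)) (Dset gamma lambda d (u j) t (kt (u j))).
move/(congr1 (fun k : nat => k%:R : R)); rewrite natrD -/(targets (u j)).
rewrite -/(kt (u j)) in Dset_ge; move: Dset_ge lambda_m_lt near_small.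
move: (phi * gamma ^ kt (u j)) (phi * (lambda * m%:R)) (#|targets (u j)|%:R) => x y a.
move: (#|_ :\: _|%:R) (#|Dset _ _ _ _ _ _|%:R) => b D; lra.
Qed.

Lemma sum_targets_ge j : (j < m)%N ->
  phi / (2 * M * L `^ theta) <= \sum_(v in targets (u j)) Q (u j) v.
Proof.
move=> jm; set c := M * L `^ theta * gamma ^ kt (u j).
have c_gt0 : 0 < c by rewrite /c !mulr_gt0 // exprz_gt0.
apply: (le_trans (y := \sum_(v in targets (u j)) 1 / c)); last first.
  apply: ler_sum => v; rewrite !inE => /andP[/andP[vk _] Jv].
  by apply: rich_far_lb; rewrite Jv vk.
have -> : phi / (2 * M * L `^ theta) = phi * gamma ^ kt (u j) / 2 * (1 / c).
  rewrite /c; move: (gamma ^ kt (u j)) (exprz_gt0 (kt (u j)) gamma_gt0) => y y_gt0.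
  by move: (L `^ theta) Lth_gt0 => P P_gt0; field; rewrite !gt_eqF.
by rewrite sumr_const -[leRHS]mulr_natl ler_wpM2r ?card_targets // ltW // divr_gt0.
Qed.

Let path_set := [set u j | j : 'I_m].
Let pairs := [set p : 'I_n * 'I_n | (p.1 \in path_set) && (p.2 \in targets p.1)].

Lemma pairs_sep p : p \in pairs -> d p.2 t <= lambda * d s t < d p.1 t.
Proof.
rewrite inE => /andP[/imsetP [j _ ->]]; rewrite /targets !inE => /andP[/andP[_ vt] _].
rewrite (path_far (ltnW (ltn_ord j))) andbT.
exact: le_trans vt (ler_wpM2l (ltW lambda_gt0) (path_dist_le (ltnW (ltn_ord j)))).
Qed.

Lemma pairs_noswap p : p \in pairs -> (p.2, p.1) \notin pairs.
Proof.
move=> /pairs_sep /andP[_ p1]; apply/negP => /pairs_sep /andP[p1' _].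
by have := lt_le_trans p1 p1'; rewrite ltxx.
Qed.

Lemma pairs_neq p : p \in pairs -> p.1 != p.2.
Proof.
move=> /pairs_sep /andP[p2 p1]; apply/eqP => e.
by move: p1; rewrite e ltNge p2.
Qed.

Lemma no_shortcut_disjoint E :
  (forall k, (k < m)%N -> forall v, adj (E0 :|: E) (u k) v -> lambda * d s t < d v t) ->
  [disjoint E & upair @: pairs].
Proof.
move=> noE; rewrite -setI_eq0; apply/eqP/setP => p; rewrite !inE.
apply/negP => /andP[pE /imsetP [q qX pq]].
have /andP[q2 _] := pairs_sep qX.
move: qX; rewrite inE => /andP[/imsetP [j _ q1] _].
have adjq : adj (E0 :|: E) q.1 q.2 by apply: adj_upair; rewrite -pq inE pE orbT.
by move: (noE j (ltn_ord j) q.2); rewrite -q1 => /(_ adjq); rewrite ltNge q2.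
Qed.

Lemma sum_pairs_ge :
  m%:R * (phi / (2 * M * L `^ theta)) <= \sum_(p in upair @: pairs) Q p.1 p.2.
Proof.
have Qsym i j : Q i j = Q j i by case: (Qprob i j).
rewrite sum_upair //; last exact: upair_inj pairs_noswap.
have -> : \sum_(p in pairs) Q p.1 p.2 = \sum_(w in path_set) \sum_(v in targets w) Q w v.
  by rewrite pair_big_dep; apply: eq_bigl => p; rewrite inE.
have card_path : #|path_set| = m.
  by rewrite card_imset ?card_ord //; exact: (lpath_inj d_ge0 E0_sub d_xx lambda_gt0 lambda_lt1 st no_shortcut).
rewrite -card_path mulr_natl -sumr_const.
by apply: ler_sum => _ /imsetP [j _ ->]; exact: sum_targets_ge.
Qed.

Lemma no_shortcut_prob_le :
  bern_prob upairs (fun p => Q p.1 p.2)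
    (fun E => forall k, (k < m)%N -> forall v, adj (E0 :|: E) (u k) v -> lambda * d s t < d v t)
  <= expR (- (m%:R * (phi / (2 * M * L `^ theta)))).
Proof.
have Q01 p : p \in upairs -> 0 <= Q p.1 p.2 <= 1 by case: (Qprob p.1 p.2).
have pairs_upairs : upair @: pairs \subset upairs.
  by apply/fintype.subsetP => _ /imsetP [p /pairs_neq pn ->]; exact: upair_in_upairs.
apply: le_trans (le_bern_prob Q01 (P' := fun E => [disjoint E & upair @: pairs]) _) _.
  by move=> E _; exact: no_shortcut_disjoint.
rewrite bern_prob_disjoint //.
apply: le_trans (prod_1B_le_expR _) _ => [p /(fintype.subsetP pairs_upairs) /Q01 /andP[] //|].
by rewrite ler_expR lerN2 sum_pairs_ge.
Qed.

End Path.

Section Reducibility.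
Variable C : R.
Let m := Num.truncn (C * L `^ (theta + 1)).
Hypothesis m_large :
  2 * (A * gamma / (gamma - 1)) * (L `^ theta / alpha) <= phi * lambda * m%:R.

Lemma not_reducible_pair s t E :
  ~ (exists k : nat, (k.+1)%:R <= C * L `^ (theta + 1) /\
       exists v, adj (E0 :|: E) (lpath conn s t k) v /\ d v t <= lambda * d s t) ->
  forall k, (k < m)%N -> forall v, adj (E0 :|: E) (lpath conn s t k) v -> lambda * d s t < d v t.
Proof.
move=> not_red k km v adj_v; rewrite ltNge; apply/negP => dv.
by apply: not_red; exists k; split; [rewrite -truncn_gt_nat | exists v].
Qed.

Lemma reducible_prob_ge :
  1 - (n * n)%:R * expR (- (m%:R * (phi / (2 * M * L `^ theta)))) <=
  gnq_prob Q (fun Eq => reducible_with lambda d conn (E0 :|: Eq) C (theta + 1)).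
Proof.
have Q01 p : p \in upairs -> 0 <= Q p.1 p.2 <= 1 by case: (Qprob p.1 p.2).
set e := expR _.
change (gnq_prob Q _) with (bern_prob upairs (fun p => Q p.1 p.2)
  (fun Eq => reducible_with lambda d conn (E0 :|: Eq) C (theta + 1))).
rewrite bern_probC lerD2l lerN2.
pose bad (st : 'I_n * 'I_n) E := st.1 != st.2 /\ forall k, (k < m)%N ->
  forall v, adj (E0 :|: E) (lpath conn st.1 st.2 k) v -> lambda * d st.1 st.2 < d v st.2.
apply: le_trans (le_bern_prob Q01 (P' := fun E => exists st, bad st E) _) _.
  move=> E _ not_red; apply: contrapT => no_bad; apply: not_red => s t st.
  apply: contrapT => not_red_st; apply: no_bad; exists (s, t).
  by split => //; exact: not_reducible_pair.
apply: le_trans (bern_prob_exists Q01 bad) _.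
rewrite (_ : (n * n)%:R * e = \sum_(st : 'I_n * 'I_n) e); last first.
  by rewrite sumr_const card_prod card_ord mulr_natl.
apply: ler_sum => -[s t] _.
have [st|/negPn/eqP <-] := boolP (s != t); last first.
  by rewrite bern_prob_eq0 ?expR_ge0 // => E _ []; rewrite eqxx.
have [no_E0|some_E0] := pselect (forall k, (k < m)%N ->
  forall v, adj E0 (lpath conn s t k) v -> lambda * d s t < d v t).
  apply: le_trans _ (no_shortcut_prob_le st no_E0 m_large).
  by apply: (le_bern_prob Q01) => E _ [].
rewrite bern_prob_eq0 ?expR_ge0 // => E _ [_ noE].
apply: some_E0 => k km v.
by move/(adjUl E)/(noE k km).
Qed.

End Reducibility.

End FixedSize.

(** * Choice of the constants *)

Section Asymptotics.
Variables (R : realType) (n : nat) (gamma A alpha phi lambda theta M : R).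
Variables (d : 'I_n -> 'I_n -> R) (E0 : {set 'I_n * 'I_n}) (conn : 'I_n -> 'I_n -> 'I_n).
Variable Q : 'I_n -> 'I_n -> R.
Hypotheses (dcoh : coherent gamma A alpha phi lambda d) (E0_sub : substrate d E0 conn).
Hypotheses (Qprob : prob_matrix Q) (Qrich : rich gamma alpha theta M d Q).
Hypothesis theta_gt0 : 0 < theta.

Let L := ln (n%:R : R).
(* With this C a fixed pair (s,t) fails with probability at most e^(phi/(2M)) / n^3. *)
Let C := 6 * M / phi.
Let c := A * gamma / (gamma - 1).
Hypotheses (L_ge1 : 1 <= L) (L_ge_alpha : expR (ln alpha / theta) <= L).
Hypotheses (L_ge_theta : 2 * (theta * ln (2 * theta) - ln alpha) <= L).
Hypothesis L_ge_C : (phi * lambda + 2 * c / alpha) / (phi * lambda * C) <= L.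

Let gamma_gt1 : 1 < gamma. Proof. by case: dcoh. Qed.
Let alpha_gt0 : 0 < alpha. Proof. by case: dcoh => _ [_ [[_ []]]]. Qed.
Let phi_gt0 : 0 < phi. Proof. by case: dcoh => _ [_ [_ []]]. Qed.
Let lambda_gt0 : 0 < lambda. Proof. by case: dcoh => _ [_ [_ [_ [/andP[]]]]]. Qed.
Let M_gt0 : 0 < M. Proof. by case: Qrich. Qed.
Let L_gt0 : 0 < L. Proof. exact: lt_le_trans L_ge1. Qed.
Let Lth_ge1 : 1 <= L `^ theta.
Proof. by rewrite -(powRr0 L) ler_powR // ?ltW. Qed.

Let kth_ge0 : 0 <= (theta * ln L - ln alpha) / ln gamma.
Proof.
apply: divr_ge0; last by rewrite ln_ge0 // ltW.
rewrite subr_ge0 mulrC -ler_pdivrMr //.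
by rewrite -[ln alpha / theta]expRK ler_ln ?posrE ?expR_gt0.
Qed.

Let kth_le : (theta * ln L - ln alpha) / ln gamma <= L / ln gamma.
Proof.
rewrite ler_pM2r ?invr_gt0 ?ln_gt0 //.
move: L_ge_theta (mul_ln_le theta_gt0 L_gt0).
move: (theta * ln L) (theta * ln (2 * theta)) (ln alpha) => x y z; lra.
Qed.

Let m := Num.truncn (C * L `^ (theta + 1)).

Let m_gt : C * (L `^ theta * L) < m%:R + 1.
Proof.
have -> : L `^ theta * L = L `^ (theta + 1).
  by rewrite powRD ?powRr1 ?ltW //; apply/implyP => _; rewrite gt_eqF.
by rewrite natr1 truncnS_gt.
Qed.

Let C_gt0 : 0 < C. Proof. by rewrite divr_gt0 ?mulr_gt0. Qed.

Let m_large : 2 * c * (L `^ theta / alpha) <= phi * lambda * m%:R.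
Proof.
have pl_gt0 : 0 < phi * lambda by rewrite mulr_gt0.
have C_le : phi * lambda + 2 * c / alpha <= L * (phi * lambda * C).
  by rewrite -ler_pdivrMr // mulr_gt0.
rewrite (_ : 2 * c * _ = L `^ theta * (2 * c / alpha)); last by ring.
move: C_le m_gt Lth_ge1 pl_gt0.
move: (phi * lambda) (L `^ theta) (2 * c / alpha) (m%:R) => a P b k; nra.
Qed.

Let n_gt0 : 0 < n%:R :> R.
Proof.
suff : 1 < n%:R :> R by apply: lt_trans.
by rewrite ltNge; apply/negP => /ln_le0; rewrite leNgt L_gt0.
Qed.

Let exponent_le : - (m%:R * (phi / (2 * M * L `^ theta))) <= phi / (2 * M) - 3 * L.
Proof.
have Lth_gt0 : 0 < L `^ theta by exact: lt_le_trans Lth_ge1.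
have k_le : phi / (2 * M * L `^ theta) <= phi / (2 * M).
  by rewrite invfM mulrA ler_piMr ?invf_le1 // divr_ge0 ?mulr_ge0 ?ltW.
have k_ge0 : 0 <= phi / (2 * M * L `^ theta) by rewrite divr_ge0 ?mulr_ge0 ?ltW.
have CPLk : C * (L `^ theta * L) * (phi / (2 * M * L `^ theta)) = 3 * L.
  by rewrite /C; field; rewrite !gt_eqF.
have m_gt' : C * (L `^ theta * L) - 1 < m%:R by rewrite ltrBlDr.
have := ler_wpM2r k_ge0 (ltW m_gt'); rewrite mulrBl CPLk mul1r.
set k := phi / (2 * M * L `^ theta) in k_le *.
move: k_le; clearbody k; move: (m%:R * k) => x; lra.
Qed.

Let expR_bound : (n * n)%:R * expR (- (m%:R * (phi / (2 * M * L `^ theta)))) <=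
  expR (phi / (2 * M)) / n%:R.
Proof.
have -> : expR (phi / (2 * M)) / n%:R = (n * n)%:R * expR (phi / (2 * M) - 3 * L).
  rewrite expRD expRN -[3]/(3%:R) expRM_natl lnK ?posrE // natrM.
  by move: (n%:R) n_gt0 => x x_gt0; field; rewrite gt_eqF.
by rewrite ler_wpM2l ?ler0n // ler_expR.
Qed.

Lemma reducible_prob_lb :
  1 - expR (phi / (2 * M)) / n%:R <=
  gnq_prob Q (fun Eq => reducible_with lambda d conn (E0 :|: Eq) C (theta + 1)).
Proof.
apply: le_trans (reducible_prob_ge dcoh E0_sub Qprob Qrich L_gt0 kth_ge0 kth_le m_large).
by rewrite lerD2l lerN2.
Qed.

End Asymptotics.

Local Open Scope classical_set_scope.
Local Open Scope ring_scope.

Lemma cvg_squeeze1 (R : realType) (p : nat -> R) (K : R) (N : nat) : 0 <= K ->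
  (forall n, (N <= n)%N -> 1 - K / n%:R <= p n <= 1) -> p @ \oo --> (1 : R).
Proof.
move=> K_ge0 p_bounds; apply/cvgrPdist_le => e e_gt0.
exists (maxn (maxn N 1) (Num.truncn (K / e)).+1) => // k /=.
rewrite !geq_max => /andP[/andP[kN k1] kK].
have /andP[lo hi] := p_bounds k kN.
have k_gt0 : 0 < (k%:R : R) by rewrite ltr0n.
have Ke_lt : K / e < k%:R by apply: lt_le_trans (truncnS_gt _) _; rewrite ler_nat.
have : K / k%:R <= e by rewrite ler_pdivrMr // mulrC -ler_pdivrMr // ltW.
by rewrite ger0_norm ?subr_ge0 //; lra.
Qed.

Theorem lemma3 (R : realType) (gamma A alpha phi lambda theta M : R) (N0 : nat)
  (d : forall n : nat, 'I_n -> 'I_n -> R)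
  (E0 : forall n : nat, {set 'I_n * 'I_n})
  (conn : forall n : nat, 'I_n -> 'I_n -> 'I_n)
  (Q : forall n : nat, 'I_n -> 'I_n -> R) :
  0 < theta ->
  (forall n : nat, (N0 <= n)%N ->
     [/\ coherent gamma A alpha phi lambda (d n),
         substrate (d n) (E0 n) (conn n),
         prob_matrix (Q n)
       & rich gamma alpha theta M (d n) (Q n)]) ->
  exists C : R, 0 < C /\
    (fun n : nat =>
       gnq_prob (Q n)
         (fun Eq => reducible_with lambda (d n) (conn n) (E0 n :|: Eq) C (theta + 1)))
    @ \oo --> (1 : R).
Proof.
move=> theta_gt0 hyps; have [[_ [_ [_ [phi_gt0 _]]]] _ _ [M_gt0 _]] := hyps N0 (leqnn N0).
pose C := 6 * M / phi; exists C; split; first by rewrite divr_gt0 ?mulr_gt0.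
pose c := A * gamma / (gamma - 1).
pose L0 := Num.max 1 (Num.max (expR (ln alpha / theta)) (Num.max
  (2 * (theta * ln (2 * theta) - ln alpha)) ((phi * lambda + 2 * c / alpha) / (phi * lambda * C)))).
apply: (@cvg_squeeze1 _ _ (expR (phi / (2 * M))) (maxn N0 (Num.truncn (expR L0)).+1)).
  exact: expR_ge0.
move=> n; rewrite geq_max => /andP[nN0 nL0]; have [coh sub prob rich] := hyps n nN0.
have n_big : expR L0 < n%:R by apply: lt_le_trans (truncnS_gt _) _; rewrite ler_nat.
have : L0 <= ln (n%:R : R).
  rewrite -[L0]expRK ler_ln ?posrE ?expR_gt0 ?(ltW n_big) //.
  exact: lt_trans (expR_gt0 L0) n_big.
rewrite !ge_max => /and4P[L_ge1 L_ge_alpha L_ge_theta L_ge_C].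
apply/andP; split.
  exact: (reducible_prob_lb coh sub prob rich theta_gt0 L_ge1 L_ge_alpha L_ge_theta L_ge_C).
by apply: bern_prob_le1 => p _; case: (prob p.1 p.2).
Qed.
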